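(* With the notation of the context, there is a constant $L>0$ depending only on $a$ and $b$ such that for every integer $m\ge\max\{-\frac{3}{4\ln u},\frac1{6c}\}$, the truncated vector $\alpha$ defined by $\alpha_k=\nu_k$ for $k\le2m+1$ and $\alpha_k=0$ otherwise satisfies: (i) $\big|\|\alpha\|^2-\frac1{4a}\big|\le Lmu^{2m}$; (ii) $\alpha^\top\eta=0$; (iii) $\big|\alpha^\top M^\top M\alpha-1\big|\le Lm^2u^{2m}$; (iv) $\alpha^\top\mathrm{Diag}(\lambda)^{-1}\alpha\le Lm^{3/2}$.
   Context: Let $a,b>0$, $\mu=\mathcal N(0,1/(4a))$ on $\mathbb R$, $c=\sqrt{a^2+2ab}$, $u=\frac{b}{a+b+c}\in(0,1)$. $f_i(x)=(c/a)^{1/4}(2^ii!)^{-1/2}e^{-(c-a)x^2}H_i(\sqrt{2c}\,x)$ ($H_i$ physicists' Hermite polynomials) form an orthonormal basis of $L^2(\mu)$; $\lambda_i=\sqrt{\frac{2a}{a+b+c}}\,u^i$. $\eta_i=\int f_id\mu$: $\eta_{2k+1}=0$, $\eta_{2k}=(c/a)^{1/4}\sqrt{\frac{2a}{a+c}}u^k\frac{\sqrt{(2k)!}}{2^kk!}$. $M^\top M$ is the symmetric matrix with $(M^\top M)_{ii}=\frac1c(2i(a^2+c^2)+(a-c)^2)$, $(M^\top M)_{i,i+2}=(M^\top M)_{i+2,i}=\frac1c(a^2-c^2)\sqrt{(i+1)(i+2)}$, other entries zero (so $\mathbb E_\mu(f'^2)=\beta^\top M^\top M\beta$ for $f=\sum\beta_if_i$).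 $\nu$ is the coefficient vector of $f_*(x)=x$: $\nu_{2k}=0$, $\nu_{2k+1}=(c/a)^{1/4}\frac{\sqrt a}{2c}\big(\frac{2c}{a+c}\big)^{3/2}u^k\frac{\sqrt{(2k+1)!}}{2^kk!}$. *)

From Stdlib Require Import Reals Lra Lia Arith.
Open Scope R_scope.

Definition cst (a b : R) : R := sqrt (a ^ 2 + 2 * a * b).
Definition uu (a b : R) : R := b / (a + b + cst a b).

Definition lam (a b : R) (i : nat) : R :=
  sqrt (2 * a / (a + b + cst a b)) * uu a b ^ i.

(* eta_i = \int f_i dmu : eta_{2k+1} = 0,
   eta_{2k} = (c/a)^{1/4} sqrt(2a/(a+c)) u^k sqrt((2k)!)/(2^k k!) *)
Definition eta (a b : R) (i : nat) : R :=
  if Nat.even i then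
    let k := Nat.div2 i in
    Rpower (cst a b / a) (1/4) * sqrt (2 * a / (a + cst a b)) * uu a b ^ k
      * sqrt (INR (fact (2 * k))) / (2 ^ k * INR (fact k))
  else 0.

Definition MtM (a b : R) (i j : nat) : R :=
  let c := cst a b in
  if Nat.eqb i j then (2 * INR i * (a ^ 2 + c ^ 2) + (a - c) ^ 2) / c
  else if Nat.eqb j (i + 2) then (a ^ 2 - c ^ 2) * sqrt (INR ((i + 1) * (i + 2))) / c
  else if Nat.eqb i (j + 2) then (a ^ 2 - c ^ 2) * sqrt (INR ((j + 1) * (j + 2))) / c
  else 0.

(* coefficient vector nu of f_*(x) = x : nu_{2k} = 0,
   nu_{2k+1} = (c/a)^{1/4} sqrt(a)/(2c) (2c/(a+c))^{3/2} u^k sqrt((2k+1)!)/(2^k k!) *)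
Definition nu (a b : R) (i : nat) : R :=
  if Nat.even i then 0
  else
    let k := Nat.div2 i in
    let c := cst a b in
    Rpower (c / a) (1/4) * sqrt a / (2 * c) * Rpower (2 * c / (a + c)) (3/2)
      * uu a b ^ k * sqrt (INR (fact (2 * k + 1))) / (2 ^ k * INR (fact k)).

Definition alpha (a b : R) (m k : nat) : R :=
  if Nat.leb k (2 * m + 1) then nu a b k else 0.

(* Since alpha is supported on {0,...,2m+1}, all the (infinite) sums below
   reduce to finite sums over indices 0..2m+1 (sum_f_R0 f n has n+1 terms). *)
Definition sqnorm_alpha (a b : R) (m : nat) : R :=
  sum_f_R0 (fun k => alpha a b m k ^ 2) (2 * m + 1).

Definition alpha_dot_eta (a b : R) (m : nat) : R :=
  sum_f_R0 (fun k => alpha a b m k * eta a b k) (2 * m + 1).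

Definition alpha_MtM_alpha (a b : R) (m : nat) : R :=
  sum_f_R0 (fun i => sum_f_R0 (fun j =>
     alpha a b m i * MtM a b i j * alpha a b m j) (2 * m + 1)) (2 * m + 1).

Definition alpha_Diaginv_alpha (a b : R) (m : nat) : R :=
  sum_f_R0 (fun k => alpha a b m k ^ 2 / lam a b k) (2 * m + 1).

From Stdlib Require Import Reals Lra Lia Arith.
Open Scope R_scope.

(* The odd coefficients of [nu] satisfy [nu_(2k+1)^2 = K^2 t_k x^k] with [x = u^2], where
   [t_k = (2k+1)!/(4^k k!^2)] are the Taylor coefficients of [(1-x)^(-3/2)], and
   [4 a K^2 = (1-x)^(3/2)].  Hence [||alpha||^2 = h_m(x)/(4a)], where [h_m] is the partial sum
   [T_m] of the series multiplied by [(1-x)^(3/2)].  Differentiating, [T_m] satisfies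
   [(1-x) T_m' = 3/2 T_m - (m+3/2) t_m x^m], so [h_m] decreases from [h_m(0) = 1] and
   [1 - 3/2 t_m x^(m+1) <= h_m(x) <= 1], with [t_m <= sqrt(2m+1)].  The form
   [alpha^T M^T M alpha] only involves [T_m] and [T_m'], and the same differential equation
   collapses it to [h_m(x) + (2m+3) t_m x^(m+1) sqrt(1-x)].  Finally [alpha_k^2/lambda_k]
   is a constant multiple of [t_k], whose partial sums are [O(m^(3/2))]. *)

Definition tcoef (k : nat) : R := INR (fact (2 * k + 1)) / (4 ^ k * INR (fact k) ^ 2).

Lemma INR_fact_pos k : 0 < INR (fact k).
Proof. apply lt_0_INR, lt_O_fact. Qed.

Lemma tcoef_pos k : 0 < tcoef k.
Proof.
  unfold tcoef. pose proof (INR_fact_pos (2 * k + 1)). pose proof (INR_fact_pos k).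
  apply Rdiv_lt_0_compat; [lra|]. apply Rmult_lt_0_compat; [apply pow_lt; lra | nra].
Qed.

Lemma tcoef_0 : tcoef 0 = 1.
Proof. unfold tcoef. simpl. field. Qed.

Lemma tcoef_S k : tcoef (S k) * (2 * INR k + 2) = tcoef k * (2 * INR k + 3).
Proof.
  unfold tcoef. replace (2 * S k + 1)%nat with (S (S (2 * k + 1))) by lia.
  rewrite !fact_simpl, !mult_INR, !S_INR, plus_INR, mult_INR. simpl INR.
  pose proof (INR_fact_pos (2 * k + 1)). pose proof (INR_fact_pos k). pose proof (pos_INR k).
  simpl pow. field. repeat split; try lra. apply pow_nonzero; lra.
Qed.

Lemma tcoef_sqr_le k : tcoef k ^ 2 <= 2 * INR k + 1.
Proof.
  induction k as [|k IHk].
  - rewrite tcoef_0. simpl. lra.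
  - rewrite S_INR. pose proof (pos_INR k).
    assert (Hsq : tcoef (S k) ^ 2 * (2 * INR k + 2) ^ 2 = tcoef k ^ 2 * (2 * INR k + 3) ^ 2).
    { rewrite <- !Rpow_mult_distr, tcoef_S. reflexivity. }
    assert (tcoef k ^ 2 * (2 * INR k + 3) ^ 2 <= (2 * INR k + 1) * (2 * INR k + 3) ^ 2).
    { apply Rmult_le_compat_r; [apply pow2_ge_0 | exact IHk]. }
    apply Rmult_le_reg_r with ((2 * INR k + 2) ^ 2); nra.
Qed.

Lemma tcoef_le_sqrt k : tcoef k <= sqrt (2 * INR k + 1).
Proof.
  pose proof (tcoef_pos k). rewrite <- (sqrt_pow2 (tcoef k)) by lra.
  apply sqrt_le_1_alt, tcoef_sqr_le.
Qed.

Lemma tcoef_le k : tcoef k <= 2 * INR k + 1.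
Proof. pose proof (tcoef_sqr_le k). pose proof (tcoef_pos k). pose proof (pos_INR k). nra. Qed.

Lemma tcoef_mul_pow_S_le m x : (1 <= m)%nat -> 0 < x < 1 ->
  tcoef m * x ^ S m <= 3 * INR m * x ^ m.
Proof.
  intros Hm Hx. pose proof (tcoef_le m). pose proof (tcoef_pos m).
  assert (1 <= INR m) by (apply (le_INR 1); assumption).
  assert (0 <= x ^ m) by (apply pow_le; lra).
  simpl pow. rewrite <- Rmult_assoc. apply Rmult_le_compat_r; nra.
Qed.

Lemma sum_tcoef_le m : (1 <= m)%nat -> sum_f_R0 tcoef m <= 4 * Rpower (INR m) (3 / 2).
Proof.
  intro Hm. assert (HM : 1 <= INR m) by (apply (le_INR 1); assumption).
  assert (Hsum : sum_f_R0 tcoef m <= (INR m + 1) * sqrt (2 * INR m + 1)).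
  { rewrite Rmult_comm, <- S_INR, <- sum_cte. apply sum_Rle. intros k Hk.
    eapply Rle_trans; [apply tcoef_le_sqrt|]. apply sqrt_le_1_alt.
    pose proof (le_INR _ _ Hk). lra. }
  assert (Hsqrt : sqrt (2 * INR m + 1) <= 2 * sqrt (INR m)).
  { pose proof (sqrt_pos (INR m)). rewrite <- (sqrt_pow2 (2 * sqrt (INR m))) by lra.
    apply sqrt_le_1_alt.
    replace ((2 * sqrt (INR m)) ^ 2) with (4 * (sqrt (INR m) * sqrt (INR m))) by ring.
    rewrite sqrt_sqrt; lra. }
  replace (3 / 2) with (1 + / 2) by field.
  rewrite Rpower_plus, Rpower_1, Rpower_sqrt by lra.
  pose proof (sqrt_pos (2 * INR m + 1)). nra.
Qed.

Definition tpoly (m : nat) (x : R) : R := sum_f_R0 (fun k => tcoef k * x ^ k) m.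

Definition dtpoly (m : nat) (x : R) : R :=
  sum_f_R0 (fun k => INR k * tcoef k * x ^ Nat.pred k) m.

Lemma tpoly_at_0 m : tpoly m 0 = 1.
Proof.
  induction m as [|m IHm]; unfold tpoly in *; simpl.
  - rewrite tcoef_0. ring.
  - rewrite IHm. ring.
Qed.

Lemma derivable_pt_lim_tpoly m x : derivable_pt_lim (tpoly m) x (dtpoly m x).
Proof.
  induction m as [|m IHm].
  - apply (derivable_pt_lim_ext (fun _ => tcoef 0)); [intro; unfold tpoly; simpl; ring|].
    unfold dtpoly; simpl. replace (0 * tcoef 0 * 1) with 0 by ring.
    apply derivable_pt_lim_const.
  - apply (derivable_pt_lim_ext (fun y => tpoly m y + tcoef (S m) * y ^ S m));
      [reflexivity|].
    replace (dtpoly (S m) x) with (dtpoly m x + tcoef (S m) * (INR (S m) * x ^ Nat.pred (S m)))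
      by (unfold dtpoly; simpl; ring).
    apply derivable_pt_lim_plus; [exact IHm|].
    apply derivable_pt_lim_scal, derivable_pt_lim_pow.
Qed.

Lemma dtpoly_S m x : dtpoly (S m) x = sum_f_R0 (fun k => INR (S k) * tcoef (S k) * x ^ k) m.
Proof. unfold dtpoly. rewrite decomp_sum by lia. simpl. ring. Qed.

Lemma sum_f_R0_mul_index_tcoef m x :
  sum_f_R0 (fun k => INR k * tcoef k * x ^ k) m = x * dtpoly m x.
Proof.
  unfold dtpoly. induction m as [|m IHm]; [simpl; ring|].
  rewrite !tech5, IHm. simpl Nat.pred. simpl pow. ring.
Qed.

(* The differential equation [(1-x) y' = 3/2 y] of [(1-x)^(-3/2)], up to the truncation error. *)
Lemma tpoly_ode m x :
  (1 - x) * dtpoly m x - 3 / 2 * tpoly m x = - (INR m + 3 / 2) * tcoef m * x ^ m.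
Proof.
  induction m as [|m IHm].
  - unfold tpoly, dtpoly; simpl. rewrite tcoef_0. ring.
  - replace ((1 - x) * dtpoly (S m) x - 3 / 2 * tpoly (S m) x)
      with (((1 - x) * dtpoly m x - 3 / 2 * tpoly m x)
            + (1 - x) * INR (S m) * tcoef (S m) * x ^ m - 3 / 2 * tcoef (S m) * x ^ S m)
      by (unfold tpoly, dtpoly; simpl; ring).
    rewrite IHm, S_INR. pose proof (tcoef_S m). pose proof (pos_INR m).
    replace (tcoef m) with (tcoef (S m) * (2 * INR m + 2) / (2 * INR m + 3))
      by (field_simplify_eq; lra).
    simpl pow. field. lra.
Qed.

Definition damped_tpoly (m : nat) (x : R) : R := tpoly m x * ((1 - x) * sqrt (1 - x)).

Lemma damped_tpoly_at_0 m : damped_tpoly m 0 = 1.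
Proof. unfold damped_tpoly. rewrite tpoly_at_0, Rminus_0_r, sqrt_1. ring. Qed.

Lemma derivable_pt_lim_pow_3_2 s : s < 1 ->
  derivable_pt_lim (fun y => (1 - y) * sqrt (1 - y)) s (- (3 / 2) * sqrt (1 - s)).
Proof.
  intro Hs.
  assert (Hlin : derivable_pt_lim (fun y => 1 - y) s (-1)).
  { replace (-1) with (0 - 1) by ring.
    apply (derivable_pt_lim_minus (fct_cte 1) id);
      [apply derivable_pt_lim_const | apply derivable_pt_lim_id]. }
  assert (Hsqrt : derivable_pt_lim (fun y => sqrt (1 - y)) s (/ (2 * sqrt (1 - s)) * -1)).
  { apply (derivable_pt_lim_comp (fun y => 1 - y) sqrt); [exact Hlin|].
    apply derivable_pt_lim_sqrt. lra. }
  assert (Hpos : 0 < sqrt (1 - s)) by (apply sqrt_lt_R0; lra).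
  replace (- (3 / 2) * sqrt (1 - s))
    with (-1 * sqrt (1 - s) + (1 - s) * (/ (2 * sqrt (1 - s)) * -1)).
  - apply (derivable_pt_lim_mult (fun y => 1 - y) (fun y => sqrt (1 - y))); assumption.
  - replace (1 - s) with (sqrt (1 - s) * sqrt (1 - s)) at 2 by (apply sqrt_sqrt; lra).
    field. lra.
Qed.

Lemma derivable_pt_lim_damped_tpoly m s : s < 1 ->
  derivable_pt_lim (damped_tpoly m) s (- sqrt (1 - s) * (INR m + 3 / 2) * tcoef m * s ^ m).
Proof.
  intro Hs.
  replace (- sqrt (1 - s) * (INR m + 3 / 2) * tcoef m * s ^ m)
    with (dtpoly m s * ((1 - s) * sqrt (1 - s)) + tpoly m s * (- (3 / 2) * sqrt (1 - s))).
  - apply (derivable_pt_lim_mult (tpoly m) (fun y => (1 - y) * sqrt (1 - y))).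
    + apply derivable_pt_lim_tpoly.
    + now apply derivable_pt_lim_pow_3_2.
  - pose proof (tpoly_ode m s) as Hode.
    replace (- sqrt (1 - s) * (INR m + 3 / 2) * tcoef m * s ^ m)
      with (sqrt (1 - s) * (- (INR m + 3 / 2) * tcoef m * s ^ m)) by ring.
    rewrite <- Hode. ring.
Qed.

Lemma damped_tpoly_le_1 m x : 0 < x < 1 -> damped_tpoly m x <= 1.
Proof.
  intros [Hx0 Hx1].
  destruct (MVT_cor2 (damped_tpoly m)
              (fun s => - sqrt (1 - s) * (INR m + 3 / 2) * tcoef m * s ^ m) 0 x Hx0)
    as [c [Hc Hcx]].
  { intros c Hc. apply derivable_pt_lim_damped_tpoly. lra. }
  rewrite damped_tpoly_at_0 in Hc.
  assert (0 <= sqrt (1 - c) * (INR m + 3 / 2) * tcoef m * c ^ m).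
  { pose proof (sqrt_pos (1 - c)). pose proof (tcoef_pos m). pose proof (pos_INR m).
    assert (0 <= c ^ m) by (apply pow_le; lra).
    apply Rmult_le_pos; [|lra]. apply Rmult_le_pos; [|lra]. apply Rmult_le_pos; lra. }
  nra.
Qed.

(* [h_m + 3/2 t_m x^(m+1)] is nondecreasing since [sqrt (1-s) <= 1]. *)
Lemma damped_tpoly_ge m x : 0 < x < 1 ->
  1 - 3 / 2 * tcoef m * x ^ S m <= damped_tpoly m x.
Proof.
  intros [Hx0 Hx1].
  destruct (MVT_cor2 (fun s => damped_tpoly m s + 3 / 2 * tcoef m * s ^ S m)
              (fun s => - sqrt (1 - s) * (INR m + 3 / 2) * tcoef m * s ^ m
                        + 3 / 2 * tcoef m * (INR (S m) * s ^ Nat.pred (S m))) 0 x Hx0)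
    as [c [Hc Hcx]].
  { intros c Hc. apply derivable_pt_lim_plus.
    - apply derivable_pt_lim_damped_tpoly. lra.
    - apply derivable_pt_lim_scal, derivable_pt_lim_pow. }
  rewrite damped_tpoly_at_0 in Hc. simpl (0 ^ S m) in Hc. simpl Nat.pred in Hc.
  assert (sqrt (1 - c) <= 1) by (rewrite <- sqrt_1 at 2; apply sqrt_le_1_alt; lra).
  pose proof (sqrt_pos (1 - c)). pose proof (tcoef_pos m). pose proof (pos_INR m).
  assert (0 <= c ^ m) by (apply pow_le; lra).
  assert (0 <= - sqrt (1 - c) * (INR m + 3 / 2) * tcoef m * c ^ m
               + 3 / 2 * tcoef m * (INR (S m) * c ^ m)).
  { replace (- sqrt (1 - c) * (INR m + 3 / 2) * tcoef m * c ^ m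
             + 3 / 2 * tcoef m * (INR (S m) * c ^ m))
      with (tcoef m * c ^ m * ((INR m + 3 / 2) * (1 - sqrt (1 - c)) + INR m / 2))
      by (rewrite S_INR; field).
    apply Rmult_le_pos; [apply Rmult_le_pos; lra|].
    apply Rplus_le_le_0_compat; [apply Rmult_le_pos|]; lra. }
  nra.
Qed.

Lemma sum_f_R0_pairs (f : nat -> R) m :
  sum_f_R0 f (2 * m + 1) = sum_f_R0 (fun k => f (2 * k)%nat + f (2 * k + 1)%nat) m.
Proof.
  induction m as [|m IHm]; [reflexivity|].
  replace (2 * S m + 1)%nat with (S (S (2 * m + 1))) by lia.
  rewrite !tech5, IHm.
  replace (S (2 * m + 1)) with (2 * S m)%nat by lia.
  replace (S (2 * S m)) with (2 * S m + 1)%nat by lia. ring.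
Qed.

Lemma sum_f_R0_indicator (A : R) p N :
  sum_f_R0 (fun j => if Nat.eqb j p then A else 0) N = if Nat.leb p N then A else 0.
Proof.
  induction N as [|N IHN].
  - destruct p; reflexivity.
  - rewrite tech5, IHN.
    destruct (Nat.eqb_spec (S N) p), (Nat.leb_spec p N), (Nat.leb_spec p (S N));
      try lia; ring.
Qed.

Lemma sum_f_R0_lt_last (B : nat -> R) n :
  sum_f_R0 (fun k => if Nat.ltb k (S n) then B k else 0) (S n) = sum_f_R0 B n.
Proof.
  rewrite tech5, (proj2 (Nat.ltb_ge (S n) (S n))) by lia. rewrite Rplus_0_r.
  apply sum_eq. intros i Hi. now rewrite (proj2 (Nat.ltb_lt i (S n))) by lia.
Qed.

Lemma sum_f_R0_shift (B : nat -> R) n :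
  sum_f_R0 (fun k => match k with O => 0 | S k' => B k' end) (S n) = sum_f_R0 B n.
Proof. rewrite decomp_sum by lia. apply Rplus_0_l. Qed.

Lemma sum_f_R0_scal (s : R) (f : nat -> R) n : sum_f_R0 (fun k => s * f k) n = s * sum_f_R0 f n.
Proof. rewrite scal_sum. apply sum_eq. intros; ring. Qed.

Section BandMatrix.

Variables (d e : nat -> R) (A : nat -> nat -> R).

Hypothesis A_band : forall i j, A i j =
  if Nat.eqb i j then d i
  else if Nat.eqb j (i + 2) then e i
  else if Nat.eqb i (j + 2) then e j
  else 0.

Lemma band_row (f : nat -> R) N i : (i <= N)%nat ->
  sum_f_R0 (fun j => A i j * f j) N
  = d i * f i + (if Nat.leb (i + 2) N then e i * f (i + 2)%nat else 0)
    + match i with S (S i') => e i' * f i' | _ => 0 end.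
Proof.
  intro HiN.
  rewrite (sum_eq _ (fun j => (if Nat.eqb j i then d i * f i else 0)
                    + (if Nat.eqb j (i + 2) then e i * f (i + 2)%nat else 0)
                    + match i with
                      | S (S i') => if Nat.eqb j i' then e i' * f i' else 0
                      | _ => 0 end)).
  2:{ intros j _. rewrite A_band.
      destruct i as [|[|i']];
        repeat match goal with |- context [Nat.eqb ?x ?y] => destruct (Nat.eqb_spec x y) end;
        try lia; subst; ring. }
  rewrite !sum_plus, !sum_f_R0_indicator, (proj2 (Nat.leb_le i N) HiN).
  destruct i as [|[|i']].
  1,2: rewrite sum_eq_R0 by reflexivity; ring.
  rewrite sum_f_R0_indicator, (proj2 (Nat.leb_le i' N)) by lia. reflexivity.
Qed.

End BandMatrix.

Definition MtM_diag (a b : R) (i : nat) : R :=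
  (2 * INR i * (a ^ 2 + cst a b ^ 2) + (a - cst a b) ^ 2) / cst a b.

Definition MtM_off (a b : R) (i : nat) : R :=
  (a ^ 2 - cst a b ^ 2) * sqrt (INR ((i + 1) * (i + 2))) / cst a b.

Lemma MtM_band a b i j : MtM a b i j =
  if Nat.eqb i j then MtM_diag a b i
  else if Nat.eqb j (i + 2) then MtM_off a b i
  else if Nat.eqb i (j + 2) then MtM_off a b j
  else 0.
Proof. reflexivity. Qed.

Definition nu_scale (a b : R) : R :=
  Rpower (cst a b / a) (1 / 4) * sqrt a / (2 * cst a b)
  * Rpower (2 * cst a b / (a + cst a b)) (3 / 2).

Lemma nu_even a b k : nu a b (2 * k) = 0.
Proof. unfold nu. now rewrite Nat.even_mul. Qed.

Lemma nu_odd a b k : nu a b (2 * k + 1)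
  = nu_scale a b * uu a b ^ k * sqrt (INR (fact (2 * k + 1))) / (2 ^ k * INR (fact k)).
Proof.
  unfold nu.
  replace (Nat.even (2 * k + 1)) with false by (now rewrite Nat.even_add, Nat.even_mul).
  replace (Nat.div2 (2 * k + 1)) with k
    by (rewrite Nat.add_1_r; symmetry; apply Nat.div2_succ_double).
  reflexivity.
Qed.

Lemma pow4_sqr_pow2 k : 4 ^ k = (2 ^ k) ^ 2.
Proof. rewrite <- pow_mult, Nat.mul_comm, pow_mult. f_equal. ring. Qed.

Lemma nu_odd_sqr a b k : nu a b (2 * k + 1) ^ 2 = nu_scale a b ^ 2 * tcoef k * (uu a b ^ 2) ^ k.
Proof.
  rewrite nu_odd. unfold tcoef. rewrite pow4_sqr_pow2.
  replace ((uu a b ^ 2) ^ k) with ((uu a b ^ k) ^ 2) by (rewrite <- !pow_mult; f_equal; lia).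
  pose proof (INR_fact_pos (2 * k + 1)). pose proof (INR_fact_pos k).
  rewrite <- (pow2_sqrt (INR (fact (2 * k + 1)))) at 2 by lra.
  field. split; [lra | apply pow_nonzero; lra].
Qed.

Lemma nu_odd_mul_next a b k :
  sqrt (INR ((2 * k + 1 + 1) * (2 * k + 1 + 2))) * nu a b (2 * k + 1) * nu a b (2 * S k + 1)
  = nu_scale a b ^ 2 * uu a b ^ (2 * k + 1) * (2 * (INR k + 1) * tcoef (S k)).
Proof.
  rewrite !nu_odd.
  replace (2 * (INR k + 1) * tcoef (S k)) with (tcoef k * (2 * INR k + 3))
    by (rewrite <- tcoef_S; ring).
  unfold tcoef.
  assert (Hfact : INR (fact (2 * S k + 1))
                  = INR ((2 * k + 1 + 1) * (2 * k + 1 + 2)) * INR (fact (2 * k + 1))).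
  { rewrite <- mult_INR. f_equal. replace (2 * S k + 1)%nat with (S (S (2 * k + 1))) by lia.
    rewrite !fact_simpl. replace (2 * k + 1 + 1)%nat with (S (2 * k + 1)) by lia.
    replace (2 * k + 1 + 2)%nat with (S (S (2 * k + 1))) by lia. ring. }
  pose proof (INR_fact_pos (2 * k + 1)). pose proof (INR_fact_pos k). pose proof (pos_INR k).
  assert (0 <= INR ((2 * k + 1 + 1) * (2 * k + 1 + 2))) by apply pos_INR.
  rewrite Hfact, sqrt_mult by lra.
  set (r1 := sqrt (INR (fact (2 * k + 1)))).
  set (r2 := sqrt (INR ((2 * k + 1 + 1) * (2 * k + 1 + 2)))).
  assert (Hr1 : r1 * r1 = INR (fact (2 * k + 1))) by (apply sqrt_sqrt; lra).
  assert (Hr2 : r2 * r2 = (2 * INR k + 2) * (2 * INR k + 3)).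
  { unfold r2. rewrite sqrt_sqrt by lra. rewrite mult_INR, !plus_INR, mult_INR. simpl. ring. }
  clearbody r1 r2.
  replace (fact (S k)) with (S k * fact k)%nat by reflexivity.
  rewrite mult_INR, S_INR, pow4_sqr_pow2.
  replace (uu a b ^ (2 * k + 1)) with (uu a b ^ k * uu a b ^ S k)
    by (rewrite <- pow_add; f_equal; lia).
  transitivity (nu_scale a b ^ 2 * uu a b ^ k * uu a b ^ S k * (r2 * r2) * (r1 * r1)
                / (2 ^ k * INR (fact k) * (2 ^ S k * ((INR k + 1) * INR (fact k))))).
  { field. repeat split; try lra; apply pow_nonzero; lra. }
  rewrite Hr1, Hr2. simpl pow. field. repeat split; try lra; apply pow_nonzero; lra.
Qed.

Lemma alpha_even a b m k : alpha a b m (2 * k) = 0.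
Proof. unfold alpha. rewrite nu_even. now destruct (Nat.leb _ _). Qed.

Lemma alpha_odd a b m k : (k <= m)%nat -> alpha a b m (2 * k + 1) = nu a b (2 * k + 1).
Proof. intro Hk. unfold alpha. now rewrite (proj2 (Nat.leb_le (2 * k + 1) (2 * m + 1))) by lia. Qed.

Lemma alpha_odd_next a b m k : (k <= m)%nat ->
  alpha a b m (2 * k + 1 + 2) = if Nat.ltb k m then nu a b (2 * S k + 1) else 0.
Proof.
  intro Hk. unfold alpha. replace (2 * k + 1 + 2)%nat with (2 * S k + 1)%nat by lia.
  destruct (Nat.ltb_spec k m), (Nat.leb_spec (2 * S k + 1) (2 * m + 1)); now try lia.
Qed.

Lemma alpha_dot_eta_eq_0 a b m : alpha_dot_eta a b m = 0.
Proof.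
  apply sum_eq_R0. intros k _.
  unfold alpha, eta, nu. destruct (Nat.even k), (Nat.leb k (2 * m + 1)); simpl; ring.
Qed.

Definition nu_link (a b : R) (k : nat) : R :=
  MtM_off a b (2 * k + 1) * nu a b (2 * k + 1) * nu a b (2 * S k + 1).

Lemma alpha_MtM_alpha_pairs a b m : alpha_MtM_alpha a b m =
  sum_f_R0 (fun k => MtM_diag a b (2 * k + 1) * nu a b (2 * k + 1) ^ 2
                     + (if Nat.ltb k m then nu_link a b k else 0)
                     + match k with O => 0 | S k' => nu_link a b k' end) m.
Proof.
  unfold alpha_MtM_alpha. rewrite sum_f_R0_pairs. apply sum_eq. intros k Hk.
  rewrite sum_eq_R0 by (intros; rewrite alpha_even; ring).
  rewrite (sum_eq _ (fun j => alpha a b m (2 * k + 1) * (MtM a b (2 * k + 1) j * alpha a b m j)))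
    by (intros; ring).
  rewrite sum_f_R0_scal, (band_row _ _ _ (MtM_band a b)) by lia.
  rewrite alpha_odd, alpha_odd_next by assumption.
  replace (Nat.leb (2 * k + 1 + 2) (2 * m + 1)) with (Nat.ltb k m)
    by (destruct (Nat.ltb_spec k m), (Nat.leb_spec (2 * k + 1 + 2) (2 * m + 1)); now try lia).
  unfold nu_link. destruct k as [|k].
  - destruct (Nat.ltb 0 m); simpl; ring.
  - replace (2 * S k + 1)%nat with (S (S (2 * k + 1))) at 5 by lia.
    rewrite alpha_odd by lia. destruct (Nat.ltb (S k) m); ring.
Qed.

Lemma Rpower_sqr y e : Rpower y e ^ 2 = Rpower y (2 * e).
Proof. simpl. rewrite Rmult_1_r, <- Rpower_plus. f_equal. ring. Qed.

Section Truncation.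

Variables a b : R.
Hypotheses (a_pos : 0 < a) (b_pos : 0 < b).

Lemma cst_sqr : cst a b ^ 2 = a ^ 2 + 2 * a * b.
Proof. unfold cst. apply pow2_sqrt. nra. Qed.

Lemma cst_gt : a < cst a b.
Proof.
  unfold cst. rewrite <- (sqrt_pow2 a) at 1 by lra. apply sqrt_lt_1_alt. nra.
Qed.

Lemma uu_eq : uu a b = (cst a b - a) / (cst a b + a).
Proof.
  pose proof cst_sqr. pose proof cst_gt. unfold uu.
  field_simplify_eq; [nra | lra].
Qed.

Lemma uu_pos : 0 < uu a b.
Proof. pose proof cst_gt. rewrite uu_eq. apply Rdiv_lt_0_compat; lra. Qed.

Lemma uu_lt_1 : uu a b < 1.
Proof.
  pose proof cst_gt. rewrite uu_eq. apply Rmult_lt_reg_r with (cst a b + a); [lra|].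
  field_simplify; lra.
Qed.

(* [1 - u^2 = (2 sqrt(a c)/(a+c))^2], which is what the powers in [nu_scale] are made of. *)
Lemma nu_scale_sqr :
  4 * a * nu_scale a b ^ 2 = (1 - uu a b ^ 2) * sqrt (1 - uu a b ^ 2).
Proof.
  pose proof cst_gt as Hc. rewrite uu_eq. unfold nu_scale.
  revert Hc. generalize (cst a b). intros c Hc.
  replace ((Rpower (c / a) (1 / 4) * sqrt a / (2 * c) * Rpower (2 * c / (a + c)) (3 / 2)) ^ 2)
    with (Rpower (c / a) (1 / 4) ^ 2 * sqrt a ^ 2 / (4 * c ^ 2)
          * Rpower (2 * c / (a + c)) (3 / 2) ^ 2) by (field; lra).
  rewrite !Rpower_sqr.
  replace (2 * (1 / 4)) with (/ 2) by field.
  rewrite Rpower_sqrt by (apply Rdiv_lt_0_compat; lra).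
  replace (2 * (3 / 2)) with (INR 3) by (simpl; field).
  rewrite Rpower_pow, sqrt_div_alt by (try apply Rdiv_lt_0_compat; lra).
  set (pa := sqrt a). set (pc := sqrt c).
  assert (Ea : pa ^ 2 = a) by (apply pow2_sqrt; lra).
  assert (Ec : pc ^ 2 = c) by (apply pow2_sqrt; lra).
  assert (0 < pa) by (apply sqrt_lt_R0; lra). assert (0 < pc) by (apply sqrt_lt_R0; lra).
  replace (1 - ((c - a) / (c + a)) ^ 2) with ((2 * pa * pc / (a + c)) ^ 2)
    by (field_simplify_eq; [rewrite Ea, Ec; ring | lra]).
  rewrite sqrt_pow2 by (apply Rlt_le, Rdiv_lt_0_compat; nra).
  clearbody pa pc. subst a c. field. lra.
Qed.

Lemma sqnorm_alpha_eq m : sqnorm_alpha a b m = damped_tpoly m (uu a b ^ 2) / (4 * a).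
Proof.
  transitivity (nu_scale a b ^ 2 * tpoly m (uu a b ^ 2)).
  - unfold sqnorm_alpha, tpoly. rewrite sum_f_R0_pairs, <- sum_f_R0_scal.
    apply sum_eq. intros k Hk. rewrite alpha_even, alpha_odd, nu_odd_sqr by assumption. ring.
  - unfold damped_tpoly. rewrite <- nu_scale_sqr. field. lra.
Qed.

Lemma alpha_Diaginv_alpha_eq m : alpha_Diaginv_alpha a b m =
  nu_scale a b ^ 2 / (sqrt (2 * a / (a + b + cst a b)) * uu a b) * sum_f_R0 tcoef m.
Proof.
  pose proof cst_gt. pose proof uu_pos.
  assert (0 < sqrt (2 * a / (a + b + cst a b))) by (apply sqrt_lt_R0, Rdiv_lt_0_compat; lra).
  unfold alpha_Diaginv_alpha. rewrite sum_f_R0_pairs, <- sum_f_R0_scal.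
  apply sum_eq. intros k Hk. rewrite alpha_even, alpha_odd, nu_odd_sqr by assumption.
  unfold lam. replace (uu a b ^ (2 * k + 1)) with ((uu a b ^ 2) ^ k * uu a b)
    by (rewrite <- pow_mult, Nat.add_1_r, <- tech_pow_Rmult; ring).
  field. repeat split; try lra; repeat apply pow_nonzero; lra.
Qed.

Lemma alpha_MtM_alpha_tpoly m : (1 <= m)%nat ->
  let x := uu a b ^ 2 in
  alpha_MtM_alpha a b m = nu_scale a b ^ 2 / cst a b *
    ((4 * (a ^ 2 + cst a b ^ 2) * x + 4 * (a ^ 2 - cst a b ^ 2) * uu a b) * dtpoly m x
     + (2 * (a ^ 2 + cst a b ^ 2) + (a - cst a b) ^ 2) * tpoly m x).
Proof.
  intros Hm x. pose proof cst_gt. destruct m as [|m]; [lia|].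
  rewrite alpha_MtM_alpha_pairs, !sum_plus, sum_f_R0_lt_last, sum_f_R0_shift.
  rewrite (sum_eq _ (fun k =>
      nu_scale a b ^ 2 / cst a b * (4 * (a ^ 2 + cst a b ^ 2)) * (INR k * tcoef k * x ^ k)
      + nu_scale a b ^ 2 / cst a b * (2 * (a ^ 2 + cst a b ^ 2) + (a - cst a b) ^ 2)
        * (tcoef k * x ^ k))).
  2:{ intros k _. unfold MtM_diag. rewrite nu_odd_sqr, plus_INR, mult_INR.
      simpl INR. fold x. field. lra. }
  rewrite (sum_eq (nu_link a b) (fun k =>
      (a ^ 2 - cst a b ^ 2) / cst a b * nu_scale a b ^ 2 * uu a b * 2
      * (INR (S k) * tcoef (S k) * x ^ k))).
  2:{ intros k _. unfold nu_link, MtM_off.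
      transitivity ((a ^ 2 - cst a b ^ 2) / cst a b
        * (sqrt (INR ((2 * k + 1 + 1) * (2 * k + 1 + 2))) * nu a b (2 * k + 1)
           * nu a b (2 * S k + 1))); [field; lra|].
      rewrite nu_odd_mul_next, S_INR.
      replace (uu a b ^ (2 * k + 1)) with (uu a b * x ^ k)
        by (unfold x; rewrite <- pow_mult, Nat.add_1_r, <- tech_pow_Rmult; ring).
      field. lra. }
  rewrite sum_plus, !sum_f_R0_scal, sum_f_R0_mul_index_tcoef, <- dtpoly_S.
  unfold tpoly. field. lra.
Qed.

Lemma alpha_MtM_alpha_eq m : (1 <= m)%nat ->
  let x := uu a b ^ 2 in
  alpha_MtM_alpha a b m
  = damped_tpoly m x + (2 * INR m + 3) * tcoef m * x ^ S m * sqrt (1 - x).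
Proof.
  intros Hm x. rewrite alpha_MtM_alpha_tpoly by assumption. fold x.
  pose proof cst_gt. pose proof uu_pos. pose proof uu_lt_1.
  pose proof nu_scale_sqr as HK. pose proof (tpoly_ode m x) as Hode.
  assert (Hx0 : 0 < x) by (unfold x; nra). assert (Hx1 : x < 1) by (unfold x; nra).
  assert (Hu : uu a b = (cst a b - a) / (cst a b + a)) by apply uu_eq.
  unfold damped_tpoly. fold x in HK |- *.
  set (r := sqrt (1 - x)) in *.
  assert (Hr : 0 < r) by (apply sqrt_lt_R0; lra).
  assert (HD : dtpoly m x
     = (3 / 2 * tpoly m x - (INR m + 3 / 2) * tcoef m * x ^ m) / (1 - x))
    by (field_simplify_eq; lra).
  assert (HK2 : nu_scale a b ^ 2 = (1 - x) * r / (4 * a)) by (field_simplify_eq; lra).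
  rewrite HD, HK2. simpl (x ^ S m).
  unfold x. rewrite Hu. clearbody r. field. repeat split; nra.
Qed.

Lemma sqnorm_alpha_bound m : (1 <= m)%nat ->
  Rabs (sqnorm_alpha a b m - 1 / (4 * a)) <= 9 / (8 * a) * INR m * uu a b ^ (2 * m).
Proof.
  intro Hm. pose proof uu_pos. pose proof uu_lt_1.
  assert (Hx : 0 < uu a b ^ 2 < 1) by (split; nra).
  rewrite sqnorm_alpha_eq, pow_mult.
  pose proof (damped_tpoly_le_1 m _ Hx). pose proof (damped_tpoly_ge m _ Hx).
  pose proof (tcoef_mul_pow_S_le m _ Hm Hx).
  rewrite Rabs_left1.
  - apply (Rmult_le_reg_r (4 * a)); [lra|]. field_simplify; lra.
  - apply (Rmult_le_reg_r (4 * a)); [lra|]. field_simplify; lra.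
Qed.

Lemma alpha_MtM_alpha_bound m : (1 <= m)%nat ->
  Rabs (alpha_MtM_alpha a b m - 1) <= 20 * INR m ^ 2 * uu a b ^ (2 * m).
Proof.
  intro Hm. pose proof uu_pos. pose proof uu_lt_1.
  assert (Hx : 0 < uu a b ^ 2 < 1) by (split; nra).
  rewrite alpha_MtM_alpha_eq, pow_mult by assumption.
  set (x := uu a b ^ 2) in *.
  pose proof (damped_tpoly_le_1 m _ Hx). pose proof (damped_tpoly_ge m _ Hx).
  pose proof (tcoef_mul_pow_S_le m _ Hm Hx) as Ht.
  assert (HM : 1 <= INR m) by (apply (le_INR 1); assumption).
  assert (sqrt (1 - x) <= 1) by (rewrite <- sqrt_1 at 2; apply sqrt_le_1_alt; lra).
  pose proof (sqrt_pos (1 - x)).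
  assert (0 <= tcoef m * x ^ S m) by (pose proof (tcoef_pos m); apply Rmult_le_pos;
    [lra | apply pow_le; lra]).
  assert (0 <= INR m * x ^ m) by (apply Rmult_le_pos; [lra | apply pow_le; lra]).
  assert (Hlink : 0 <= (2 * INR m + 3) * tcoef m * x ^ S m * sqrt (1 - x)
                  <= (2 * INR m + 3) * (3 * INR m * x ^ m)).
  { rewrite !Rmult_assoc, <- (Rmult_assoc (tcoef m)). split.
    - apply Rmult_le_pos; [lra | apply Rmult_le_pos; lra].
    - apply Rmult_le_compat_l; [lra|]. nra. }
  assert (INR m * x ^ m <= INR m ^ 2 * x ^ m) by nra.
  apply Rabs_le. split; lra.
Qed.

Lemma alpha_Diaginv_alpha_bound :
  exists C, 0 <= C /\ forall m, (1 <= m)%nat ->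
    alpha_Diaginv_alpha a b m <= C * Rpower (INR m) (3 / 2).
Proof.
  pose proof cst_gt. pose proof uu_pos.
  set (s := sqrt (2 * a / (a + b + cst a b))).
  assert (0 < s) by (apply sqrt_lt_R0, Rdiv_lt_0_compat; lra).
  exists (4 * (nu_scale a b ^ 2 / (s * uu a b))). split.
  - apply Rmult_le_pos; [lra|].
    apply Rmult_le_pos; [apply pow2_ge_0 | left; apply Rinv_0_lt_compat; nra].
  - intros m Hm. rewrite alpha_Diaginv_alpha_eq, (Rmult_comm 4), Rmult_assoc.
    apply Rmult_le_compat_l; [|now apply sum_tcoef_le].
    apply Rmult_le_pos; [apply pow2_ge_0 | left; apply Rinv_0_lt_compat; nra].
Qed.

(* This is the only consequence of the lower bound on [m] in the theorem that is needed. *)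
Lemma truncation_index_ge_1 m :
  Rmax (- 3 / (4 * ln (uu a b))) (1 / (6 * cst a b)) <= INR m -> (1 <= m)%nat.
Proof.
  intro Hm. pose proof cst_gt.
  assert (0 < INR m).
  { eapply Rlt_le_trans; [|exact (Rle_trans _ _ _ (Rmax_r _ _) Hm)].
    apply Rdiv_lt_0_compat; lra. }
  destruct m; [simpl in *; lra | lia].
Qed.

End Truncation.

Theorem mainTheorem16 :
  forall a b : R, 0 < a -> 0 < b ->
  exists L : R, 0 < L /\
    forall m : nat,
      Rmax (- 3 / (4 * ln (uu a b))) (1 / (6 * cst a b)) <= INR m ->
      Rabs (sqnorm_alpha a b m - 1 / (4 * a)) <= L * INR m * uu a b ^ (2 * m) /\
      alpha_dot_eta a b m = 0 /\
      Rabs (alpha_MtM_alpha a b m - 1) <= L * INR m ^ 2 * uu a b ^ (2 * m) /\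
      alpha_Diaginv_alpha a b m <= L * Rpower (INR m) (3 / 2).
Proof.
  intros a b Ha Hb.
  destruct (alpha_Diaginv_alpha_bound a b Ha Hb) as [C [HC HDiag]].
  assert (0 < 9 / (8 * a)) by (apply Rdiv_lt_0_compat; lra).
  exists (9 / (8 * a) + 20 + C). split; [lra|].
  intros m Hm. pose proof (truncation_index_ge_1 a b Ha Hb m Hm) as Hm1.
  assert (0 <= uu a b ^ (2 * m)) by (apply pow_le; pose proof (uu_pos a b Ha Hb); lra).
  pose proof (pos_INR m). pose proof (pow2_ge_0 (INR m)).
  repeat split.
  - eapply Rle_trans; [now apply sqnorm_alpha_bound|]. rewrite !Rmult_assoc.
    apply Rmult_le_compat_r; [apply Rmult_le_pos|]; lra.
  - apply alpha_dot_eta_eq_0.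
  - eapply Rle_trans; [now apply alpha_MtM_alpha_bound|]. rewrite !Rmult_assoc.
    apply Rmult_le_compat_r; [apply Rmult_le_pos|]; lra.
  - eapply Rle_trans; [now apply HDiag|].
    apply Rmult_le_compat_r; [unfold Rpower; left; apply exp_pos | lra].
Qed.
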